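(* Let $G_1$ and $G_2$ be two vertex-disjoint simple connected graphs with $|V(G_1)|=n_1$, $|V(G_2)|=n_2$, $|E(G_1)|=m_1$, $|E(G_2)|=m_2$. Then the edge Q-join $G_1\underline{\vee}_Q G_2$ satisfies \[ F(G_1\underline{\vee}_Q G_2)=F(G_1)+F(G_2)+3n_2^{2}M_1(G_1)+3m_1M_1(G_2)+M_4(G_1)+3n_2\,HM(G_1)+3\,ReZM(G_1)+m_1^{2}(6m_2+m_1n_2)+m_1n_2^{3}. \]
   Context: For a simple graph $G$ and $v\in V(G)$, $d_G(v)$ is the degree of $v$. Define $M_1(G)=\sum_{v\in V(G)}d_G(v)^2$, $F(G)=\sum_{v\in V(G)}d_G(v)^3$, $M_4(G)=\sum_{v\in V(G)}d_G(v)^4$, $HM(G)=\sum_{uv\in E(G)}[d_G(u)+d_G(v)]^2$, and $ReZM(G)=\sum_{uv\in E(G)}d_G(u)d_G(v)\,[d_G(u)+d_G(v)]$. The graph $Q(G)$ is obtained from $G$ by inserting a new vertex into each edge of $G$ (subdividing it) and then joining by an edge each pair of new vertices that lie on adjacent edges of $G$ (edges sharing an end vertex); let $I(G)$ denote the set of these new vertices, so $V(Q(G))=V(G)\cup I(G)$. The edge Q-join $G_1\underline{\vee}_Q G_2$ is the graph obtained from $Q(G_1)$ and $G_2$ (taken vertex-disjoint) by joining each vertex of $I(G_1)$ to every vertex of $G_2$ by an edge. *)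

From mathcomp Require Import all_boot.
Set Implicit Arguments. Unset Strict Implicit. Unset Printing Implicit Defensive.

(* A simple graph: a symmetric irreflexive relation r on a finite vertex type V. *)

Definition deg (V : finType) (r : rel V) (v : V) : nat := #|[set w | r v w]|.

Definition is_edge (V : finType) (r : rel V) (e : {set V}) : bool :=
  [exists x, [exists y, r x y && (e == [set x; y])]].

Definition edge_type (V : finType) (r : rel V) := {e : {set V} | is_edge r e}.

Definition nverts (V : finType) (r : rel V) : nat := #|V|.
Definition nedges (V : finType) (r : rel V) : nat := #|{: edge_type r}|.

Definition M1 (V : finType) (r : rel V) : nat := \sum_(v : V) deg r v ^ 2.
Definition Fidx (V : finType) (r : rel V) : nat := \sum_(v : V) deg r v ^ 3.
Definition M4 (V : finType) (r : rel V) : nat := \sum_(v : V) deg r v ^ 4.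
(* for an edge e = {u,v}: sum over x in e of deg x = d(u)+d(v),
   product over x in e of deg x = d(u) d(v) *)
Definition HM (V : finType) (r : rel V) : nat :=
  \sum_(e : edge_type r) (\sum_(x in val e) deg r x) ^ 2.
Definition ReZM (V : finType) (r : rel V) : nat :=
  \sum_(e : edge_type r) (\prod_(x in val e) deg r x) * (\sum_(x in val e) deg r x).

(* The edge Q-join of (V1,r1) and (V2,r2): vertex set V(G1) + I(G1) + V(G2),
   where I(G1) is represented by the edges of G1. *)
Definition qjoin_vert (V1 V2 : finType) (r1 : rel V1) : finType :=
  ((V1 + edge_type r1) + V2)%type.

Definition qjoin_adj (V1 V2 : finType) (r1 : rel V1) (r2 : rel V2) :
  rel (qjoin_vert V2 r1) := fun a b =>
  match a, b with
  | inl (inl u), inl (inr e) => u \in val e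
  | inl (inr e), inl (inl u) => u \in val e
  | inl (inr e), inl (inr f) => (e != f) && (val e :&: val f != set0)
  | inl (inr _), inr _ => true
  | inr _, inl (inr _) => true
  | inr w, inr w' => r2 w w'
  | _, _ => false
  end.

Definition connected (V : finType) (r : rel V) : Prop := forall x y : V, connect r x y.
Arguments qjoin_adj [V1 V2] r1 r2 _ _.

From mathcomp Require Import all_boot ssralg ring.

(* The degrees in the edge Q-join are d(u) for u in V(G1), d(u) + d(v) + n2 for
   the vertex inserted into the edge uv (its two ends, the d(u) + d(v) - 2 edges
   adjacent to uv, and all of G2), and d(w) + m1 for w in V(G2).  Cubing and
   summing, the identity (a + b)^3 = a^3 + b^3 + 3ab(a + b) and the double
   counting \sum_{uv in E} (g(u) + g(v)) = \sum_v g(v) d(v) produce the indices of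
   the statement. *)

Set Implicit Arguments.
Unset Strict Implicit.
Unset Printing Implicit Defensive.

Lemma sum_mem_card (T : finType) (A : {set T}) : \sum_(x : T) (x \in A : nat) = #|A|.
Proof. by rewrite -sum1_card [RHS]big_mkcond; apply: eq_bigr => x _; case: (x \in A). Qed.

Lemma sum_set2 (T : finType) (g : T -> nat) a b :
  a != b -> \sum_(x in [set a; b]) g x = g a + g b.
Proof. by move=> ab; rewrite big_setU1 ?big_set1 ?inE. Qed.

Section Graph.

Variables (V : finType) (r : rel V).
Hypotheses (sym : symmetric r) (irr : irreflexive r).

Lemma degE v : deg r v = \sum_(w : V) (r v w : nat).
Proof. by rewrite /deg -sum_mem_card; apply: eq_bigr => w _; rewrite inE. Qed.

Lemma edgeP (e : edge_type r) : exists a b, [/\ a != b, r a b & val e = [set a; b]].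
Proof.
case: e => E /= /existsP [a /existsP [b /andP [rab /eqP ->]]].
by exists a, b; split => //; apply: contraTneq rab => ->; rewrite irr.
Qed.

Lemma card_edge (e : edge_type r) : #|val e| = 2.
Proof. by have [a [b [ab _ ->]]] := edgeP e; rewrite cards2 ab. Qed.

Lemma edge_inj (e f : edge_type r) a b :
  a != b -> a \in val e -> b \in val e -> a \in val f -> b \in val f -> e = f.
Proof.
move=> ab ae be af bf.
suff ends (g : edge_type r) : a \in val g -> b \in val g -> val g = [set a; b].
  by apply: val_inj; rewrite (ends e ae be) (ends f af bf).
move=> ag bg; apply/eqP; rewrite eq_sym eqEcard card_edge cards2 ab leqnn andbT.
by apply/subsetP => z /set2P [] ->.
Qed.

Lemma card_edgeI (e f : edge_type r) :
  #|val e :&: val f| = 2 * (e == f) + ((e != f) && (val e :&: val f != set0)).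
Proof.
have [<-|neq_ef] := eqVneq e f; first by rewrite setIid card_edge.
rewrite -card_gt0 /=.
case: (leqP #|val e :&: val f| 1) => [|/card_gt1P [a [b [/setIP [ae af] /setIP [be bf]]]]].
  by case: #|_| => [|[]].
by move=> ab; case/eqP: neq_ef; apply: (edge_inj ab).
Qed.

Lemma sum_incident u : \sum_(e : edge_type r) (u \in val e : nat) = deg r u.
Proof.
have -> : \sum_(e : edge_type r) (u \in val e : nat) =
          #|[set e : edge_type r | u \in val e]|.
  by rewrite -sum_mem_card; apply: eq_bigr => e _; rewrite inE.
rewrite /deg -(card_imset _ val_inj).
have inj_edge : {in [set w | r u w] &, injective (fun w => [set u; w])}.
  move=> w w'; rewrite !inE => uw uw' /setP /(_ w') /[!inE] /[!eqxx] /[!orbT].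
  by case/orP => /eqP w'E //; rewrite w'E irr in uw'.
rewrite -(card_in_imset inj_edge); apply: eq_card => E; apply/imsetP/imsetP.
- case=> e /[!inE] ue ->; have [a [b [_ rab Ee]]] := edgeP e.
  move: ue; rewrite Ee => /set2P [] ->.
  + by exists b; rewrite ?inE.
  + by exists a; rewrite ?inE 1?sym // setUC.
- case=> w /[!inE] uw ->.
  have uw_edge : is_edge r [set u; w].
    by apply/existsP; exists u; apply/existsP; exists w; rewrite uw eqxx.
  by exists (exist (is_edge r) _ uw_edge); rewrite //= inE set21.
Qed.

Lemma sum_edge_ends (g : V -> nat) :
  \sum_(e : edge_type r) \sum_(x in val e) g x = \sum_(x : V) g x * deg r x.
Proof.
rewrite (eq_bigr _ (fun e _ => big_mkcond _ _)) exchange_big /=.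
apply: eq_bigr => x _; rewrite -sum_incident big_distrr /=.
by apply: eq_bigr => e _; case: (x \in val e); rewrite ?muln1 ?muln0.
Qed.

Lemma sum_deg : \sum_(v : V) deg r v = 2 * nedges r.
Proof.
transitivity (\sum_(e : edge_type r) \sum_(x in val e) 1).
  by rewrite sum_edge_ends; apply: eq_bigr => v _; rewrite mul1n.
rewrite (eq_bigr _ (fun e _ => sum1_card _)) /= (eq_bigr _ (fun e _ => card_edge e)).
by rewrite sum_nat_const mulnC.
Qed.

Lemma sum_deg_ends (e : edge_type r) :
  \sum_(x in val e) deg r x =
  2 + \sum_(f : edge_type r) ((e != f) && (val e :&: val f != set0)).
Proof.
transitivity (\sum_(f : edge_type r) #|val e :&: val f|).
  rewrite -(eq_bigr _ (fun x _ => sum_incident x)) exchange_big /=.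
  apply: eq_bigr => f _; rewrite -sum_mem_card big_mkcond /=.
  by apply: eq_bigr => x _; rewrite inE; case: (x \in val e).
rewrite (eq_bigr _ (fun f _ => card_edgeI e f)) big_split /= -big_distrr /=.
by rewrite (bigD1 e) //= eqxx big1 // => f; rewrite eq_sym => /negbTE ->.
Qed.

Lemma edge_cube_shift (e : edge_type r) c :
  (\sum_(x in val e) deg r x + c) ^ 3 =
  \sum_(x in val e) deg r x ^ 3
  + 3 * ((\prod_(x in val e) deg r x) * \sum_(x in val e) deg r x)
  + 3 * c * (\sum_(x in val e) deg r x) ^ 2 + 3 * c ^ 2 * \sum_(x in val e) deg r x + c ^ 3.
Proof.
have [a [b [ab _ ->]]] := edgeP e.
by rewrite !sum_set2 // big_setU1 ?big_set1 ?inE //=; ring.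
Qed.

Lemma sum_edge_cube_shift c :
  \sum_(e : edge_type r) (\sum_(x in val e) deg r x + c) ^ 3 =
  M4 r + 3 * ReZM r + 3 * c * HM r + 3 * c ^ 2 * M1 r + nedges r * c ^ 3.
Proof.
have -> : M4 r = \sum_(e : edge_type r) \sum_(x in val e) deg r x ^ 3.
  by rewrite sum_edge_ends; apply: eq_bigr => x _; rewrite -expnSr.
have -> : M1 r = \sum_(e : edge_type r) \sum_(x in val e) deg r x.
  by rewrite sum_edge_ends; apply: eq_bigr => x _; rewrite mulnn.
rewrite /ReZM /HM /nedges -sum_nat_const !big_distrr -!big_split /=.
by apply: eq_bigr => e _; rewrite edge_cube_shift; ring.
Qed.

Lemma sum_deg_cube_shift c :
  \sum_(v : V) (deg r v + c) ^ 3 =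
  Fidx r + 3 * c * M1 r + 6 * c ^ 2 * nedges r + nverts r * c ^ 3.
Proof.
have -> : 6 * c ^ 2 * nedges r = 3 * c ^ 2 * \sum_(v : V) deg r v by rewrite sum_deg; ring.
rewrite /Fidx /M1 /nverts -sum_nat_const !big_distrr -!big_split /=.
by apply: eq_bigr => v _; ring.
Qed.

End Graph.

Section EdgeQJoin.

Variables (V1 V2 : finType) (r1 : rel V1) (r2 : rel V2).
Hypotheses (sym1 : symmetric r1) (irr1 : irreflexive r1).

Lemma deg_qjoin_vertex1 u : deg (qjoin_adj r1 r2) (inl (inl u)) = deg r1 u.
Proof.
rewrite degE !big_sumType /= -(sum_incident sym1 irr1).
by rewrite big1 // add0n [X in _ + X]big1 // addn0.
Qed.

Lemma deg_qjoin_edge1 e :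
  deg (qjoin_adj r1 r2) (inl (inr e)) = \sum_(x in val e) deg r1 x + nverts r2.
Proof.
rewrite degE !big_sumType /= sum_mem_card card_edge // sum_deg_ends //.
by rewrite sum_nat_const muln1.
Qed.

Lemma deg_qjoin_vertex2 w : deg (qjoin_adj r1 r2) (inr w) = deg r2 w + nedges r1.
Proof. by rewrite degE !big_sumType /= big1 // add0n sum_nat_const muln1 addnC degE. Qed.

End EdgeQJoin.

Theorem theorem6 (V1 V2 : finType) (r1 : rel V1) (r2 : rel V2)
  (sym1 : symmetric r1) (irr1 : irreflexive r1)
  (sym2 : symmetric r2) (irr2 : irreflexive r2)
  (conn1 : connected r1) (conn2 : connected r2) :
  let n1 := nverts r1 in let n2 := nverts r2 in
  let m1 := nedges r1 in let m2 := nedges r2 in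
  Fidx (qjoin_adj r1 r2) =
    Fidx r1 + Fidx r2 + 3 * n2 ^ 2 * M1 r1 + 3 * m1 * M1 r2 + M4 r1
    + 3 * n2 * HM r1 + 3 * ReZM r1 + m1 ^ 2 * (6 * m2 + m1 * n2) + m1 * n2 ^ 3.
Proof.
move=> n1 n2 m1 m2; rewrite /n2 /m1 /m2 [LHS]/Fidx !big_sumType /=.
under eq_bigr do rewrite deg_qjoin_vertex1 //.
under [X in _ + X + _]eq_bigr do rewrite deg_qjoin_edge1 //.
under [X in _ + X]eq_bigr do rewrite deg_qjoin_vertex2.
rewrite -/(Fidx r1) (sum_edge_cube_shift sym1 irr1) (sum_deg_cube_shift sym2 irr2).
ring.
Qed.
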